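(* For integers $0 \le j \le i$ let $P(i,j) = \frac{i!}{(i-j)!}$, and for an integer $i \geq 0$ let $F(i) = \sum_{j=0}^{i} P(i,j)$. For integers $N \geq 1$ and $1 \leq n \leq N$ define \[ P_{RPS}(n \mid N) = \frac{P(N,n)\,\bigl(F(n)-1\bigr)}{\sum_{i=1}^{N} P(N,i)\,\bigl(F(i)-1\bigr)} . \] Then \[ \lim_{N \to \infty} P_{RPS}(N \mid N) = 1 . \]
   Context: $P_{RPS}(\cdot \mid N)$ is called the RPST distribution: a probability distribution on $\{1, \dots, N\}$, where $P(N,n)$ is the number of ordered selections (permutation sequences) of length $n$ from $N$ elements, and $F(i)$ is the number of permutation events, including the empty one, on a set of $i$ elements. *)

From Stdlib Require Import Reals Arith.
From Coquelicot Require Import Coquelicot.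
Open Scope R_scope.

Definition Pperm (i j : nat) : nat := Nat.div (fact i) (fact (i - j)).

Definition Fsum (i : nat) : nat :=
  List.fold_right Nat.add 0%nat (List.map (Pperm i) (List.seq 0 (S i))).

Definition rps_weight (N n : nat) : R := INR (Pperm N n) * (INR (Fsum n) - 1).

Definition P_RPS (n N : nat) : R :=
  rps_weight N n / sum_f 1 N (fun i => rps_weight N i).

From Stdlib Require Import Reals.
From Coquelicot Require Import Coquelicot.
From Stdlib Require Import Arith Lia Lra List.

(* Write w(n) = P(N,n) (F(n) - 1).  The recurrence F(n+1) = 1 + (n+1) F(n)
   gives n! <= F(n) < 3 n! and F(N) - 1 >= N!, so the diagonal weight w(N)
   is at least N!^2, while, as P(N,n) <= N!, every weight satisfies
   w(n) <= 3 N! n!.  Since sum_{n<N} n! <= 2 (N-1)!, the off-diagonal mass is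
   at most 6 N! (N-1)! = (6/N) N!^2, hence 1 - 6/N <= P_RPS(N|N) <= 1. *)

Lemma fact_divide_fact m n : (m <= n)%nat -> Nat.divide (fact m) (fact n).
Proof.
  induction 1 as [|n _ IH].
  - apply Nat.divide_refl.
  - rewrite fact_simpl. now apply Nat.divide_mul_r.
Qed.

Lemma Pperm_mul_fact i j : (j <= i)%nat -> (Pperm i j * fact (i - j))%nat = fact i.
Proof.
  intros Hji. unfold Pperm.
  destruct (fact_divide_fact (i - j) i ltac:(lia)) as [q Hq].
  rewrite Hq, Nat.div_mul by apply fact_neq_0. reflexivity.
Qed.

Lemma Pperm_le_fact i j : (Pperm i j <= fact i)%nat.
Proof.
  unfold Pperm. apply Nat.Div0.div_le_upper_bound.
  pose proof (lt_O_fact (i - j)). nia.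
Qed.

Lemma Pperm_0_r i : Pperm i 0 = 1%nat.
Proof. unfold Pperm. rewrite Nat.sub_0_r. apply Nat.div_same, fact_neq_0. Qed.

Lemma Pperm_diag n : Pperm n n = fact n.
Proof. unfold Pperm. now rewrite Nat.sub_diag, Nat.div_1_r. Qed.

Lemma Pperm_succ i j : (j <= i)%nat -> Pperm (S i) (S j) = (S i * Pperm i j)%nat.
Proof.
  intros Hji. apply (Nat.mul_cancel_r _ _ (fact (i - j))); [apply fact_neq_0|].
  pose proof (Pperm_mul_fact (S i) (S j) ltac:(lia)) as Hsucc.
  simpl (S i - S j)%nat in Hsucc.
  rewrite Hsucc, <- Nat.mul_assoc, Pperm_mul_fact by exact Hji.
  symmetry. apply fact_simpl.
Qed.

Lemma list_sum_map_mul_l {A : Type} (c : nat) (f : A -> nat) (l : list A) :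
  list_sum (map (fun x => (c * f x)%nat) l) = (c * list_sum (map f l))%nat.
Proof. induction l as [|x l IH]; simpl; [lia|]. rewrite IH. lia. Qed.

Lemma Fsum_succ n : Fsum (S n) = (1 + S n * Fsum n)%nat.
Proof.
  change (list_sum (map (Pperm (S n)) (seq 0 (S (S n))))
          = 1 + S n * list_sum (map (Pperm n) (seq 0 (S n))))%nat.
  replace (seq 0 (S (S n))) with (0%nat :: map S (seq 0 (S n)))
    by now rewrite seq_shift.
  rewrite map_cons, map_map, Pperm_0_r, <- list_sum_map_mul_l.
  apply (f_equal (fun l => 1 + list_sum l)%nat), map_ext_in.
  intros j Hj. apply in_seq in Hj. apply Pperm_succ. lia.
Qed.

Lemma fact_le_Fsum n : (fact n <= Fsum n)%nat.
Proof.
  induction n as [|n IH]; [reflexivity|].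
  rewrite Fsum_succ, fact_simpl. nia.
Qed.

Lemma fact_le_Fsum_pred n : (1 <= n)%nat -> (fact n <= Fsum n - 1)%nat.
Proof.
  intros Hn. destruct n as [|n]; [lia|].
  rewrite Fsum_succ, fact_simpl. pose proof (fact_le_Fsum n). nia.
Qed.

Lemma Fsum_lt_3fact n : (Fsum n < 3 * fact n)%nat.
Proof.
  induction n as [|[|n] IH]; [cbv; lia | cbv; lia |].
  rewrite Fsum_succ, (fact_simpl (S n)). nia.
Qed.

Lemma rps_weight_INR N n : rps_weight N n = INR (Pperm N n * (Fsum n - 1)).
Proof.
  pose proof (fact_le_Fsum n). pose proof (lt_O_fact n).
  unfold rps_weight. rewrite mult_INR, minus_INR by lia. reflexivity.
Qed.

Lemma rps_weight_nonneg N n : 0 <= rps_weight N n.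
Proof. rewrite rps_weight_INR. apply pos_INR. Qed.

Lemma rps_weight_le N n : rps_weight N n <= 3 * INR (fact N) * INR (fact n).
Proof.
  rewrite rps_weight_INR.
  replace (3 * INR (fact N) * INR (fact n)) with (INR (fact N * (3 * fact n)))
    by (rewrite !mult_INR; simpl; ring).
  apply le_INR, Nat.mul_le_mono.
  - apply Pperm_le_fact.
  - pose proof (Fsum_lt_3fact n). lia.
Qed.

Lemma rps_weight_diag_ge N : (1 <= N)%nat -> INR (fact N) * INR (fact N) <= rps_weight N N.
Proof.
  intros HN. rewrite rps_weight_INR, Pperm_diag, <- mult_INR.
  apply le_INR, Nat.mul_le_mono_l, fact_le_Fsum_pred, HN.
Qed.

Lemma sum_fact_succ_le m : sum_f_R0 (fun k => INR (fact (S k))) m <= 2 * INR (fact (S m)).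
Proof.
  induction m as [|m IH]; [simpl; lra|].
  rewrite tech5, (fact_simpl (S m)), mult_INR, S_INR.
  assert (1 <= INR (S m)) by (apply (le_INR 1); lia).
  pose proof (INR_fact_lt_0 (S m)). nra.
Qed.

Lemma rps_mass_le N m :
  sum_f_R0 (fun k => rps_weight N (S k)) m <= 6 * INR (fact N) * INR (fact (S m)).
Proof.
  apply Rle_trans with (sum_f_R0 (fun k => INR (fact (S k)) * (3 * INR (fact N))) m).
  - apply sum_Rle. intros k _. rewrite Rmult_comm. apply rps_weight_le.
  - rewrite <- scal_sum.
    pose proof (sum_fact_succ_le m). pose proof (INR_fact_lt_0 N). nra.
Qed.

Lemma sum_f_1_split_last (f : nat -> R) m :
  sum_f 1 (S (S m)) f = sum_f_R0 (fun k => f (S k)) m + f (S (S m)).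
Proof.
  unfold sum_f. replace (S (S m) - 1)%nat with (S m) by lia.
  rewrite tech5, Nat.add_1_r. f_equal.
  apply sum_eq. intros k _. now rewrite Nat.add_1_r.
Qed.

Lemma part_of_total_bounds (s a c : R) :
  0 <= s -> 0 < a -> s <= c * a -> 1 - c <= a / (s + a) <= 1.
Proof.
  intros Hs Ha Hsa. split.
  - apply Rle_div_r; [lra|]. nra.
  - apply Rle_div_l; lra.
Qed.

Lemma P_RPS_diag_bounds N : (2 <= N)%nat -> 1 - 6 / INR N <= P_RPS N N <= 1.
Proof.
  intros HN. destruct N as [|[|m]]; [lia | lia |].
  unfold P_RPS. rewrite sum_f_1_split_last.
  set (N := S (S m)).
  assert (HNpos : 0 < INR N) by (apply lt_0_INR; unfold N; lia).
  pose proof (INR_fact_lt_0 N) as HfN.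
  assert (HfactN : INR (fact N) = INR N * INR (fact (S m)))
    by (unfold N; rewrite (fact_simpl (S m)), mult_INR; reflexivity).
  apply part_of_total_bounds.
  - apply cond_pos_sum. intros k. apply rps_weight_nonneg.
  - pose proof (rps_weight_diag_ge N ltac:(unfold N; lia)). nra.
  - apply Rle_trans with (6 / INR N * (INR (fact N) * INR (fact N))).
    + replace (6 / INR N * (INR (fact N) * INR (fact N)))
        with (6 * INR (fact N) * INR (fact (S m))).
      * apply rps_mass_le.
      * rewrite HfactN. field. lra.
    + apply Rmult_le_compat_l.
      * apply Rlt_le, Rdiv_lt_0_compat; lra.
      * apply rps_weight_diag_ge. unfold N. lia.
Qed.

Lemma is_lim_seq_div_INR (c : R) : is_lim_seq (fun n => c / INR n) 0.
Proof.
  replace (Finite 0) with (Rbar_mult c (Rbar_inv p_infty)) by (simpl; f_equal; ring).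
  apply is_lim_seq_scal_l, is_lim_seq_inv; [apply is_lim_seq_INR | discriminate].
Qed.

Theorem mainTheorem2 : is_lim_seq (fun N : nat => P_RPS N N) 1%R.
Proof.
  apply (is_lim_seq_le_le_loc (fun N => 1 - 6 / INR N) _ (fun _ => 1)).
  - exists 2%nat. apply P_RPS_diag_bounds.
  - replace (Finite 1) with (Rbar_minus 1 0) by (simpl; f_equal; ring).
    apply is_lim_seq_minus'; [apply is_lim_seq_const | apply is_lim_seq_div_INR].
  - apply is_lim_seq_const.
Qed.
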